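(* Let $X=[-1,1]\times\mathbb{R}$ with the Lorentzian metric $g=-dt^2+ds^2$. Equip $X$ with the metric \[ d_{\mathrm N}(x,y)=\operatorname*{ess\,sup}_{z\in X}\big|\,|\sigma(x,z)|-|\sigma(y,z)|\,\big|. \] Then no continuous curve $c\colon[0,1]\to X$ with $x_2(c(0))\neq x_2(c(1))$ is $d_{\mathrm N}$-rectifiable.
   Context: The signed Lorentzian distance $\sigma$ of $g$ is defined as follows, with the supremum taken over causal curves $c$ from $x$ to $y$ and $l(c)=\int\sqrt{-g(c',c')}$: \begin{itemize} \item $\sigma(x,y)=\sup l(c)$ if $y$ lies in the causal future of $x$; \item $\sigma(x,y)=-\sup l(c)$ if $y$ lies in the causal past of $x$; \item $\sigma(x,y)=0$ otherwise. \end{itemize} The essential supremum is with respect to Lebesgue measure. $x_2$ denotes the second coordinate $s$. A curve is $d_{\mathrm N}$-rectifiable if $\sup\sum_i d_{\mathrm N}(c(t_{i-1}),c(t_i))<\infty$, the supremum being over all finite partitions $0=t_0<\dots<t_N=1$. *)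

From HB Require Import structures.
From mathcomp Require Import all_boot all_order all_algebra.
From mathcomp Require Import all_classical all_reals all_analysis.
Set Implicit Arguments. Unset Strict Implicit. Unset Printing Implicit Defensive.
Import Order.TTheory GRing.Theory Num.Theory.
Import numFieldNormedType.Exports.
Local Open Scope classical_set_scope.
Local Open Scope ring_scope.

Section Strip.
Variable R : realType.

(* Points are pairs (t, s); X = [-1,1] x R. *)
Definition Xset : set (R * R) := [set p | -1 <= p.1 <= 1].

(* A C^1 causal curve [0,1] -> X from x to y, given by its two components.
   [fut = true]: future-directed (|s'| <= t'); [fut = false]: past-directed
   (|s'| <= -t'). *)
Definition causal_curve (fut : bool) (x y : R * R) (ct cs : R -> R) : Prop :=
  [/\ (forall u : R, derivable ct u 1 /\ derivable cs u 1),
      continuous ((derive1 ct)) /\ continuous ((derive1 cs)),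
      (forall u : R, 0 <= u <= 1 -> Xset (ct u, cs u)),
      (ct 0, cs 0) = x /\ (ct 1, cs 1) = y &
      (forall u : R, 0 <= u <= 1 ->
         `|(derive1 cs) u| <= (if fut then (derive1 ct) u else - (derive1 ct) u))].

Definition lor_length (ct cs : R -> R) : \bar R :=
  (\int[lebesgue_measure]_(u in `[0%R, 1%R]%classic)
     (Num.sqrt ((derive1 ct) u ^+ 2 - (derive1 cs) u ^+ 2))%:E)%E.

Definition causal_lengths (fut : bool) (x y : R * R) : set (\bar R) :=
  [set l | exists ct cs, causal_curve fut x y ct cs /\ l = lor_length ct cs].

Definition Jplus (x y : R * R) : Prop := exists ct cs, causal_curve true x y ct cs.
Definition Jminus (x y : R * R) : Prop := exists ct cs, causal_curve false x y ct cs.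

Definition sigma (x y : R * R) : \bar R :=
  if `[< Jplus x y >] then ereal_sup (causal_lengths true x y)
  else if `[< Jminus x y >] then (- ereal_sup (causal_lengths false x y))%E
  else 0%E.

Definition leb2 := ((@lebesgue_measure R) \x (@lebesgue_measure R))%E.

Definition ess_sup_X (f : R * R -> \bar R) : \bar R :=
  ereal_inf [set M | (\forall z \ae leb2, Xset z -> (f z <= M)%E)].

Definition dN (x y : R * R) : \bar R :=
  ess_sup_X (fun z => `| `|sigma x z| - `|sigma y z| |%E).

Definition dN_rectifiable (c : R -> R * R) : Prop :=
  exists M : R, forall (n : nat) (t : nat -> R),
    t 0%N = 0 -> t n = 1 -> (forall i, (i < n)%N -> t i < t i.+1) ->
    (\sum_(i < n) dN (c (t i)) (c (t i.+1)) <= M%:E)%E.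

End Strip.

From HB Require Import structures.
From mathcomp Require Import all_boot all_order all_algebra.
From mathcomp Require Import all_classical all_reals all_analysis.
From mathcomp Require Import lra ring zify.
Set Implicit Arguments.
Unset Strict Implicit.
Unset Printing Implicit Defensive.

Import Order.TTheory GRing.Theory Num.Theory.
Import numFieldNormedType.Exports.
Local Open Scope classical_set_scope.
Local Open Scope ring_scope.

(** The key estimate is [d_N(x, y) >= sqrt(|s_y - s_x| / 16)] whenever
    [0 < |s_y - s_x| <= 1/64].  For such x, y one finds a square of positive
    measure inside X all of whose points z are spacelike to one of x, y (so
    [sigma = 0] there) and timelike to the other with squared interval at least
    [|s_y - s_x| / 16] (so [|sigma|] is at least the length of the straight
    segment).  Cutting c, by the intermediate value theorem, into n arcs with
    equal s-increments [D / n] then gives partition sums at least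
    [n sqrt(D / 16 n) = sqrt(n D) / 4], which is unbounded. *)

Section Causality.
Variable R : realType.
Implicit Types (x y z : R * R) (ct cs : R -> R).

Definition spacetime_interval x z : R := (z.1 - x.1) ^+ 2 - (z.2 - x.2) ^+ 2.

Lemma spacetime_intervalE x z : spacetime_interval x z =
  ((z.1 - x.1) + (z.2 - x.2)) * ((z.1 - x.1) - (z.2 - x.2)).
Proof. by rewrite /spacetime_interval; ring. Qed.

Lemma lin_comb_le01 ct cs (a b : R) :
  (forall u, derivable ct u 1 /\ derivable cs u 1) ->
  (forall u, 0 <= u <= 1 -> 0 <= a * derive1 ct u + b * derive1 cs u) ->
  a * ct 0 + b * cs 0 <= a * ct 1 + b * cs 1.
Proof.
move=> hd hab; pose F := a \*: ct + b \*: cs.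
have F' (u : R) : is_derive u 1 F (a * derive1 ct u + b * derive1 cs u).
  have [/derivableP dct /derivableP dcs] := hd u.
  by rewrite !derive1E; apply: is_deriveD; apply: is_deriveZ.
have dF (u : R) : derivable F u 1 by have := F' u => -[].
apply: (@ger0_derive1_ndecr _ F 0 1) => //.
- move=> u /[!in_itv] /andP[u0 u1].
  rewrite derive1E (@derive_val _ _ _ _ _ _ _ (F' u)).
  by apply: hab; rewrite !ltW.
- by apply: derivable_within_continuous => u _.
Qed.

Lemma causal_curve_endpoints fut x y ct cs : causal_curve fut x y ct cs ->
  `|y.2 - x.2| <= (if fut then y.1 - x.1 else x.1 - y.1).
Proof.
case=> hd _ _ [<- <-] /= hder.
have mono (a b : R) : `|b| = 1 ->
    (forall u, 0 <= u <= 1 -> `|derive1 cs u| <= a * derive1 ct u) ->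
    a * ct 0 + b * cs 0 <= a * ct 1 + b * cs 1.
  move=> b1 hab; apply: lin_comb_le01 => // u /hab.
  have := ler_norm (- (b * derive1 cs u)); rewrite normrN normrM b1 mul1r; lra.
rewrite ler_norml; case: fut hder => hder.
- have h u : 0 <= u <= 1 -> `|derive1 cs u| <= 1 * derive1 ct u.
    by rewrite mul1r; apply: hder.
  by have := mono _ 1 (normr1 _) h; have := mono _ (-1) (normrN1 _) h; lra.
- have h u : 0 <= u <= 1 -> `|derive1 cs u| <= -1 * derive1 ct u.
    by rewrite mulN1r; apply: hder.
  by have := mono _ 1 (normr1 _) h; have := mono _ (-1) (normrN1 _) h; lra.
Qed.

Lemma causal_curve_interval_ge0 fut x y ct cs :
  causal_curve fut x y ct cs -> 0 <= spacetime_interval x y.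
Proof.
move=> /causal_curve_endpoints; rewrite /spacetime_interval subr_ge0 ler_norml.
by case: fut => /andP[h1 h2]; nra.
Qed.

Definition segment (a b : R) : R -> R := fun v => a + (b - a) * v.

Lemma segment_derive (a b u : R) : is_derive u 1 (segment a b) (b - a).
Proof. by apply: is_derive_eq; rewrite add0r mul1r /GRing.scale /= mulr1. Qed.

Lemma segment_derive1 (a b : R) : derive1 (segment a b) = cst (b - a).
Proof.
apply/funext => u.
by rewrite derive1E (@derive_val _ _ _ _ _ _ _ (segment_derive a b u)).
Qed.

Lemma segment_causal fut x z : Xset x -> Xset z ->
  `|z.2 - x.2| <= (if fut then z.1 - x.1 else x.1 - z.1) ->
  causal_curve fut x z (segment x.1 z.1) (segment x.2 z.2).
Proof.
case: x z => [x1 x2] [z1 z2] /andP[/= x1l x1r] /andP[/= z1l z1r] /= hc.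
split; rewrite ?segment_derive1 /segment /=.
- by move=> u; split; apply: ex_derive; apply: segment_derive.
- by split; apply: cst_continuous.
- by move=> u /andP[u0 u1]; rewrite /Xset /=; apply/andP; split; nra.
- by split; congr pair; ring.
- by move=> u _; rewrite opprB.
Qed.

Lemma segment_length x z :
  lor_length (segment x.1 z.1) (segment x.2 z.2) =
  (Num.sqrt (spacetime_interval x z))%:E.
Proof.
rewrite /lor_length !segment_derive1.
rewrite (_ : (fun _ => _) = cst (Num.sqrt (spacetime_interval x z))%:E) //.
rewrite integral_cst //= lebesgue_measure_itv /=.
by rewrite lte01 -EFinB subr0 -EFinM mulr1.
Qed.

Lemma sigma_spacelike x z : spacetime_interval x z < 0 -> sigma x z = 0%E.
Proof.
move=> xz; rewrite /sigma !asboolF // => -[ct [cs /causal_curve_interval_ge0]];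
  by rewrite leNgt xz.
Qed.

Lemma sigma_timelike x z : Xset x -> Xset z -> 0 < spacetime_interval x z ->
  ((Num.sqrt (spacetime_interval x z))%:E <= `|sigma x z|)%E.
Proof.
move=> Xx Xz xz; have xz' := xz; rewrite spacetime_intervalE in xz'.
have length_le fut : `|z.2 - x.2| <= (if fut then z.1 - x.1 else x.1 - z.1) ->
    ((Num.sqrt (spacetime_interval x z))%:E <=
     ereal_sup (causal_lengths fut x z))%E.
  move=> hc; apply: ereal_sup_ubound; exists (segment x.1 z.1), (segment x.2 z.2).
  by rewrite segment_length; split => //; apply: segment_causal.
have [future|past] := ltP 0 (z.1 - x.1).
  have hc : `|z.2 - x.2| <= z.1 - x.1 by rewrite ler_norml; apply/andP; split; nra.
  rewrite /sigma asboolT; last first.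
    by exists (segment x.1 z.1), (segment x.2 z.2); apply: segment_causal.
  by apply: le_trans (lee_abs _); apply: length_le true hc.
have hc : `|z.2 - x.2| <= x.1 - z.1 by rewrite ler_norml; apply/andP; split; nra.
rewrite /sigma asboolF => [|[ct [cs /causal_curve_endpoints]]]; last first.
  by rewrite ler_norml; nra.
rewrite asboolT; last first.
  by exists (segment x.1 z.1), (segment x.2 z.2); apply: segment_causal.
by rewrite abseN; apply: le_trans (lee_abs _); apply: length_le false hc.
Qed.

End Causality.

Section SeparatingSquares.
Variable R : realType.
Implicit Types x y z : R * R.

Lemma ess_sup_X_ge_square (f : R * R -> \bar R) (c : R * R) (r L : R) : 0 < r ->
  -1 <= c.1 - r -> c.1 + r <= 1 ->
  (forall z, `|z.1 - c.1| < r -> `|z.2 - c.2| < r -> (L%:E <= f z)%E) ->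
  (L%:E <= ess_sup_X f)%E.
Proof.
move=> r0 lo hi hf; apply: le_ereal_inf_tmp => M [N [mN N0 sN]].
rewrite leNgt; apply/negP => ML.
pose B := `]c.1 - r, c.1 + r[ `*` `]c.2 - r, c.2 + r[.
have BN : B `<=` N.
  move=> z [/=]; rewrite !in_itv /= => /andP[a1 b1] /andP[a2 b2].
  have Xz : Xset z by apply/andP; split; lra.
  have Lf : (L%:E <= f z)%E by apply: hf; rewrite ltr_distl; apply/andP; split; lra.
  apply: sN => /(_ Xz) fM.
  by have := le_lt_trans Lf (le_lt_trans fM ML); rewrite ltxx.
have : (leb2 B <= leb2 N)%E.
  by apply: le_measure => //; rewrite inE //; apply: measurableX.
rewrite N0 /leb2 product_measure1E //= !lebesgue_measure_itv /=.
rewrite !lte_fin !ltrD2l gt0_cp //= -!EFinD -EFinM lee_fin.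
by apply/negP; rewrite -ltNge; apply: mulr_gt0; lra.
Qed.

Definition separates (m : R) x y z :=
  (spacetime_interval x z < 0 /\ m <= spacetime_interval y z) \/
  (spacetime_interval y z < 0 /\ m <= spacetime_interval x z).

Definition separable (m : R) x y := exists (c : R * R) (r : R),
  [/\ 0 < r, -1 <= c.1 - r, c.1 + r <= 1 &
      forall z, `|z.1 - c.1| < r -> `|z.2 - c.2| < r -> separates m x y z].

Lemma dN_ge_separable (m : R) x y : 0 < m -> Xset x -> Xset y ->
  separable m x y -> ((Num.sqrt m)%:E <= dN x y)%E.
Proof.
move=> m0 Xx Xy [c [r [r0 lo hi sep]]].
apply: (ess_sup_X_ge_square r0 lo hi) => z z1 z2.
have Xz : Xset z.
  by move: z1; rewrite ltr_distl => /andP[? ?]; apply/andP; split; lra.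
have sqrt_le w : Xset w -> m <= spacetime_interval w z ->
    ((Num.sqrt m)%:E <= `|sigma w z|)%E.
  move=> Xw mw; apply: le_trans (sigma_timelike Xw Xz (lt_le_trans m0 mw)).
  by rewrite lee_fin ler_wsqrtr.
case: (sep z z1 z2) => -[/sigma_spacelike -> mz].
  by rewrite abse0 sub0e abseN abse_id; apply: sqrt_le.
by rewrite abse0 sube0 abse_id; apply: sqrt_le.
Qed.

Lemma separable_sym (m : R) x y : separable m x y -> separable m y x.
Proof.
move=> [c [r [r0 lo hi sep]]]; exists c, r; split => // z z1 z2.
by case: (sep z z1 z2); [right|left].
Qed.

Definition reflect (a b : R) (p : R * R) := (a * p.1, b * p.2).

Lemma sqr_norm1 (e : R) : `|e| = 1 -> e ^+ 2 = 1.
Proof. by move=> e1; rewrite -(real_normK (num_real e)) e1 expr1n. Qed.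

Lemma dist_scale_norm1 (e u v : R) : `|e| = 1 -> `|e * u - v| = `|u - e * v|.
Proof.
move=> e1; rewrite -[LHS]mul1r -e1 -normrM mulrBr mulrA -expr2 sqr_norm1 //.
by rewrite mul1r distrC.
Qed.

Lemma spacetime_interval_reflect (a b : R) x z : `|a| = 1 -> `|b| = 1 ->
  spacetime_interval (reflect a b x) (reflect a b z) = spacetime_interval x z.
Proof.
move=> a1 b1; rewrite /spacetime_interval /= -!mulrBr !exprMn.
by rewrite (sqr_norm1 a1) (sqr_norm1 b1) !mul1r.
Qed.

Lemma separable_reflect (a b m : R) x y : `|a| = 1 -> `|b| = 1 ->
  separable m (reflect a b x) (reflect a b y) -> separable m x y.
Proof.
move=> a1 b1 [c [r [r0 lo hi sep]]].
have /andP[c1l c1r] : - (1 - r) <= a * c.1 <= 1 - r.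
  by rewrite -ler_norml normrM a1 mul1r ler_norml; apply/andP; split; lra.
exists (reflect a b c), r; split => //=; try lra.
move=> z z1 z2; have := sep (reflect a b z).
rewrite /= (dist_scale_norm1 _ _ a1) (dist_scale_norm1 _ _ b1) => /(_ z1 z2).
by rewrite /separates !spacetime_interval_reflect.
Qed.

(* The square lies just past x in a spacelike direction, while y is at time
   distance at least 1/4 from it. *)
Lemma separable_far x y : -1 <= x.1 <= 0 -> 0 < y.2 - x.2 <= 1/64 ->
  1/4 <= `|y.1 - x.1| -> separable ((y.2 - x.2) / 16) x y.
Proof.
case: x y => [t1 p] [t2 q] /= /andP[t1l t1r] /andP[d0 d1] far.
exists (t1 + 1/64, p - 3/64), (1/64); split => /=; try lra.
case=> zt zs /=; rewrite !ltr_distl => /andP[h1 h2] /andP[h3 h4]; left.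
rewrite !spacetime_intervalE /=; split.
  by rewrite nmulr_rlt0; lra.
move: far; rewrite ler_normr => /orP[] far.
- have hA : 1/4 <= - (zt - t2 + (zs - q)) by lra.
  have hB : 1/8 <= - (zt - t2 - (zs - q)) by lra.
  by have := ler_pM (_ : 0 <= 1/4) (_ : 0 <= 1/8) hA hB; nra.
- have hA : 1/8 <= zt - t2 + (zs - q) by lra.
  have hB : 1/4 <= zt - t2 - (zs - q) by lra.
  by have := ler_pM (_ : 0 <= 1/8) (_ : 0 <= 1/4) hA hB; nra.
Qed.

(* The square lies near the null line of slope -1 through x, at distance about
   1/4 from x, shifted by [3 (y.2 - x.2) / 8] in [t + s]: this puts it in the
   future of x yet on the past side of the parallel null line through y. *)
Lemma separable_close x y : -1 <= x.1 <= 1/2 -> x.1 <= y.1 < x.1 + 1/4 ->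
  0 < y.2 - x.2 <= 1/64 -> separable ((y.2 - x.2) / 16) x y.
Proof.
case: x y => [t1 p] [t2 q] /= /andP[t1l t1r] /andP[t12 t21] /andP[d0 d1].
exists (t1 + 3 * (q - p) / 16 + 1/4, p + 3 * (q - p) / 16 - 1/4), ((q - p) / 16).
split => /=; try lra.
case=> zt zs /=; rewrite !ltr_distl => /andP[h1 h2] /andP[h3 h4]; right.
rewrite !spacetime_intervalE /=; split.
  by rewrite nmulr_rlt0; lra.
have hA : (q - p) / 4 <= zt - t1 + (zs - p) by lra.
have hB : 1/4 <= zt - t1 - (zs - p) by lra.
by have := ler_pM (_ : 0 <= (q - p) / 4) (_ : 0 <= 1/4) hA hB; nra.
Qed.

Lemma separable_small_step x y : Xset x -> Xset y ->
  0 < `|y.2 - x.2| <= 1/64 -> separable (`|y.2 - x.2| / 16) x y.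
Proof.
wlog lt_xy : x y / x.2 < y.2.
  move=> wlog_xy Xx Xy d; have [lt|gt|eq] := ltgtP x.2 y.2.
  - exact: wlog_xy.
  - by apply: separable_sym; rewrite distrC; apply: wlog_xy => //; rewrite distrC.
  - by move: d; rewrite eq subrr normr0 ltxx.
rewrite gtr0_norm ?subr_gt0 //.
wlog x_past : x y lt_xy / x.1 <= 0.
  move=> wlog_t Xx Xy d; have [le0|gt0] := leP x.1 0; first exact: wlog_t.
  apply: (@separable_reflect (-1) 1); rewrite ?normrN ?normr1 //.
  move: Xx Xy; rewrite /Xset => /andP[? ?] /andP[? ?].
  have := wlog_t (reflect (-1) 1 x) (reflect (-1) 1 y); rewrite /Xset /= !mul1r.
  by apply => //; rewrite ?mulN1r; try (apply/andP; split); lra.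
move=> /andP[xl _] /andP[yl yr] d.
have [far|close] := leP (1/4) `|y.1 - x.1|.
  by apply: separable_far; rewrite ?subr_gt0 // xl.
move: close; rewrite ltr_norml => /andP[close1 close2].
have [fwd|bwd] := leP x.1 y.1.
  by apply: separable_close => //; apply/andP; split; lra.
(* Reflecting s and swapping the points reduces to the case [x.1 <= y.1]. *)
apply: (@separable_reflect 1 (-1)); rewrite ?normrN ?normr1 //.
apply: separable_sym.
have := @separable_close (reflect 1 (-1) y) (reflect 1 (-1) x).
rewrite /= !mul1r !mulN1r opprK [- x.2 + _]addrC.
by apply; apply/andP; split; lra.
Qed.

Lemma dN_ge_small_step x y : Xset x -> Xset y -> 0 < `|y.2 - x.2| <= 1/64 ->
  ((Num.sqrt (`|y.2 - x.2| / 16))%:E <= dN x y)%E.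
Proof.
move=> Xx Xy d; apply: dN_ge_separable => //; last exact: separable_small_step.
by case/andP: d => d0 _; apply: divr_gt0.
Qed.

Lemma dN_sum_ge_equal_steps (c : R -> R * R) (t : nat -> R) (n : nat) (h : R) :
  0 < h <= 1/64 -> (forall i, (i <= n)%N -> Xset (c (t i))) ->
  (forall i, (i < n)%N -> `|(c (t i.+1)).2 - (c (t i)).2| = h) ->
  ((Num.sqrt (h / 16) *+ n)%:E <= \sum_(i < n) dN (c (t i)) (c (t i.+1)))%E.
Proof.
move=> h_small tX t_step; rewrite -[X in _ *+ X]card_ord -sumr_const -sumEFin.
apply: lee_sum => i _; have i_lt := ltn_ord i.
rewrite -(t_step i i_lt); apply: dN_ge_small_step; rewrite ?t_step //.
- exact: tX (ltnW i_lt).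
- exact: tX i_lt.
Qed.

End SeparatingSquares.

Section EquallySpacedLevels.
Variables (R : realType) (s : R -> R) (N : nat).
Hypotheses (N_gt0 : (0 < N)%N) (s_cont : {within `[0, 1], continuous s}).

Definition level (i : nat) : R := s 0 + i%:R * ((s 1 - s 0) / N%:R).

Lemma level0 : level 0 = s 0.
Proof. by rewrite /level mul0r addr0. Qed.

Lemma levelS i : level i.+1 = level i + (s 1 - s 0) / N%:R.
Proof. by rewrite /level -natr1; ring. Qed.

Lemma levelN : level N = s 1.
Proof. by rewrite /level mulrCA mulfV ?mulr1 ?pnatr_eq0 -?lt0n //; ring. Qed.

Lemma level_between k : (k < N)%N ->
  Num.min (level k) (s 1) <= level k.+1 <= Num.max (level k) (s 1).
Proof.
move=> kN; have kR : (k.+1)%:R <= (N%:R : R) by rewrite ler_nat.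
have NR : (0 : R) < N%:R by rewrite ltr0n.
rewrite -levelN levelS /level -natr1 in kR *.
set d := (s 1 - s 0) / N%:R.
by rewrite ge_min le_max; have [d0|d0] := leP 0 d; apply/andP; split; apply/orP;
  [left|right|right|left]; nra.
Qed.

Lemma ivt_after (a v : R) : 0 <= a <= 1 ->
  Num.min (s a) (s 1) <= v <= Num.max (s a) (s 1) -> v != s a ->
  exists2 b, a < b <= 1 & s b = v.
Proof.
move=> /andP[a0 a1] hv vsa.
have [|b] := IVT a1 _ hv.
  apply: continuous_subspaceW s_cont => u /=; rewrite !in_itv /= => /andP[au u1].
  by rewrite (le_trans a0 au).
rewrite in_itv /= => /andP[ab b1] sb; exists b => //.
rewrite b1 andbT lt_neqAle ab andbT.
by apply: contra_neq vsa => ab_eq; rewrite -sb ab_eq.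
Qed.

Lemma level_dist i : `|level i.+1 - level i| = `|s 1 - s 0| / N%:R.
Proof.
by rewrite levelS addrAC subrr add0r normrM normfV (ger0_norm (ler0n _ _)).
Qed.

Hypothesis s01 : s 0 != s 1.

Lemma level_step_neq0 : (s 1 - s 0) / N%:R != 0.
Proof.
by rewrite mulf_neq0 ?invr_eq0 ?pnatr_eq0 -?lt0n // subr_eq0 eq_sym.
Qed.

Lemma level_partition_prefix k : (k < N)%N ->
  exists t : nat -> R, [/\ t 0%N = 0,
    forall i, (i <= k)%N -> 0 <= t i <= 1 /\ s (t i) = level i &
    forall i, (i < k)%N -> t i < t i.+1].
Proof.
elim: k => [_|k IH /[dup] /ltnW /IH [t [t0 t_level t_incr]] kN].
  exists (fun=> 0); split=> // i; rewrite leqn0 => /eqP ->.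
  by rewrite level0 lexx ler01.
have [tk01 stk] := t_level k (leqnn k); have /andP[tk0 _] := tk01.
have [b /andP[tkb b1] sb] : exists2 b, t k < b <= 1 & s b = level k.+1.
  apply: ivt_after; rewrite ?stk //; first exact: level_between (ltnW kN).
  by rewrite levelS -[X in _ != X]addr0 (inj_eq (addrI _)) level_step_neq0.
exists (fun i => if i == k.+1 then b else t i); split => // i.
- rewrite leq_eqVlt ltnS => /orP[/eqP ->|ik].
    by rewrite eqxx sb b1 (le_trans tk0 (ltW tkb)).
  by rewrite (ltn_eqF (leq_ltn_trans ik (ltnSn k))); apply: t_level.
- rewrite ltnS leq_eqVlt eqSS => /orP[/eqP ->|ik].
    by rewrite eqxx (ltn_eqF (ltnSn k)).
  by rewrite !ifN_eq ?eqSS; [apply: t_incr | lia | lia].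
Qed.

Lemma level_neq_end i : (i < N)%N -> level i != s 1.
Proof.
move=> iN; rewrite -levelN /level (inj_eq (addrI _)).
by rewrite (inj_eq (mulIf level_step_neq0)) eqr_nat neq_ltn iN.
Qed.

Lemma level_partition : exists t : nat -> R, [/\ t 0%N = 0, t N = 1,
  forall i, (i < N)%N -> t i < t i.+1 &
  forall i, (i <= N)%N -> 0 <= t i <= 1 /\ s (t i) = level i].
Proof.
have last_lt : (N.-1 < N)%N by rewrite ltn_predL.
have [t [t0 t_level t_incr]] := level_partition_prefix last_lt.
have [/andP[_ tl1] stl] := t_level N.-1 (leqnn _).
have tl : t N.-1 < 1.
  rewrite lt_neqAle tl1 andbT; apply: contra_neq (level_neq_end last_lt).
  by move=> e; rewrite -stl e.
exists (fun i => if i == N then 1 else t i); split.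
- by rewrite ifN_eq //; lia.
- by rewrite eqxx.
- move=> i iN /=; rewrite ifN_eq; last lia.
  have [e|ne] := eqVneq i.+1 N; first by rewrite (_ : i = N.-1) //; lia.
  by apply: t_incr; lia.
- move=> i; rewrite leq_eqVlt => /orP[/eqP ->|iN].
    by rewrite eqxx levelN lexx ler01.
  by rewrite ifN_eq; [apply: t_level | ]; lia.
Qed.

End EquallySpacedLevels.

Lemma sqrt_step_sum (R : realType) (D : R) (k : nat) : 0 <= D -> (0 < k)%N ->
  Num.sqrt (D / (k * k)%:R / 16) *+ (k * k) = k%:R * Num.sqrt D / 4.
Proof.
move=> D0 k0; have kR : (k%:R : R) != 0 by rewrite pnatr_eq0 -lt0n.
have -> : D / (k * k)%:R / 16 = D * (1 / (4 * k%:R)) ^+ 2.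
  by rewrite natrM; field.
rewrite sqrtrM // sqrtr_sqr ger0_norm; last by rewrite divr_ge0 ?mulr_ge0.
by rewrite -[_ *+ (k * k)]mulr_natr natrM; field.
Qed.

Lemma many_small_steps (R : realType) (M D : R) : 0 < D -> exists n : nat,
  [/\ (0 < n)%N, 0 < D / n%:R <= 1/64 & M < Num.sqrt (D / n%:R / 16) *+ n].
Proof.
move=> D0; have sqrtD0 : 0 < Num.sqrt D by rewrite sqrtr_gt0.
pose k := (Num.truncn (4 * `|M| / Num.sqrt D + 64 * D)).+1.
have k_gt : 4 * `|M| / Num.sqrt D + 64 * D < k%:R := truncnS_gt _.
have M_ge0 : 0 <= 4 * `|M| / Num.sqrt D by rewrite divr_ge0 ?mulr_ge0 ?sqrtr_ge0.
exists (k * k)%N; split; first by rewrite muln_gt0.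
- rewrite divr_gt0 ?ltr0n ?muln_gt0 //= ler_pdivrMr ?ltr0n ?muln_gt0 // natrM.
  have k1 : 1 <= (k%:R : R) by rewrite ler1n.
  nra.
- rewrite sqrt_step_sum ?ltW //; have := ler_norm M.
  have : 4 * `|M| < k%:R * Num.sqrt D.
    by rewrite -ltr_pdivrMr //; apply: le_lt_trans k_gt; lra.
  lra.
Qed.

Theorem theorem3 (R : realType) (c : R -> R * R) :
  {within `[0, 1]%classic, continuous c} ->
  (forall u : R, 0 <= u <= 1 -> Xset (c u)) ->
  (c 0).2 != (c 1).2 ->
  ~ dN_rectifiable c.
Proof.
move=> c_cont cX c01 [M sum_le].
pose s u := (c u).2.
have s_cont : {within `[0, 1], continuous s}.
  by move=> u; apply: continuous_comp (c_cont u) _; exact: cvg_snd.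
have D0 : 0 < `|s 1 - s 0| by rewrite normr_gt0 subr_eq0 eq_sym.
have [n [n_gt0 step_small sum_gt]] := many_small_steps M D0.
have [t [t0 t1 t_incr t_level]] := level_partition n_gt0 s_cont c01.
have := sum_le n t t0 t1 t_incr; apply/negP; rewrite -ltNge.
apply: lt_le_trans (dN_sum_ge_equal_steps (c := c) (t := t) step_small _ _).
- by rewrite lte_fin.
- by move=> i /t_level [/cX].
- move=> i i_lt; have [_ si] := t_level i (ltnW i_lt).
  have [_ si1] := t_level i.+1 i_lt.
  by rewrite -/(s (t i.+1)) -/(s (t i)) si si1 level_dist.
Qed.
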